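(* For every $(i,j)\in\mathcal I_0$ there is an integer $z$ such that $F_{ij}F_{\mathcal I_1}=q^{z}F_{\mathcal I_1}F_{ij}$ in $U_q$.
   Context: Let $m,n\ge 1$, let $q$ be an indeterminate, and let indices range over $[1,m+n]$. Put $q_i=q$ if $i\le m$ and $q_i=q^{-1}$ if $i>m$. Let $\mathcal I_0=\{(i,j):1\le i<j\le m \text{ or } m+1\le i<j\le m+n\}$, $\mathcal I_1=\{(i,j):1\le i\le m<j\le m+n\}$. The quantum supergroup $U_q=U_q(\mathfrak{gl}(m|n))$ is the associative $\mathbb C(q)$-superalgebra generated by $K_j^{\pm1}$ ($j\in[1,m+n]$) and $E_{i,i+1},F_{i,i+1}$ ($1\le i<m+n$), where $K_j^{\pm1}$ and $E_{i,i+1},F_{i,i+1}$ for $i\ne m$ are even and $E_{m,m+1},F_{m,m+1}$ are odd, subject to: $K_iK_j=K_jK_i$, $K_iK_i^{-1}=1$; $K_iE_{j,j+1}K_i^{-1}=q_i^{\delta_{ij}-\delta_{i,j+1}}E_{j,j+1}$, $K_iF_{j,j+1}K_i^{-1}=q_i^{-(\delta_{ij}-\delta_{i,j+1})}F_{j,j+1}$; $[E_{i,i+1},F_{j,j+1}]=\delta_{ij}\frac{K_iK_{i+1}^{-1}-K_i^{-1}K_{i+1}}{q_i-q_i^{-1}}$; $E_{m,m+1}^2=F_{m,m+1}^2=0$; $E_{i,i+1}E_{j,j+1}=E_{j,j+1}E_{i,i+1}$ and $F_{i,i+1}F_{j,j+1}=F_{j,j+1}F_{i,i+1}$ for $|i-j|>1$;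 for $|i-j|=1$, $i\neq m$, and $X\in\{E,F\}$: $X_{i,i+1}^2X_{j,j+1}-(q+q^{-1})X_{i,i+1}X_{j,j+1}X_{i,i+1}+X_{j,j+1}X_{i,i+1}^2=0$; and $[E_{m-1,m+2},E_{m,m+1}]=[F_{m-1,m+2},F_{m,m+1}]=0$. Here for homogeneous $x,y$, $[x,y]=xy-(-1)^{\bar x\bar y}yx$. For $i<j$ with $j>i+1$, $E_{ij}=E_{ic}E_{cj}-q_c^{-1}E_{cj}E_{ic}$ and $F_{ij}=-q_cF_{ic}F_{cj}+F_{cj}F_{ic}$ for $i<c<j$ (independent of $c$); $E_{ij},F_{ij}$ are odd iff $(i,j)\in\mathcal I_1$. Order on $\mathcal I_1$: $(i,j)\prec(s,t)$ iff $j>t$, or $j=t$ and $i<s$. $F_{\mathcal I_1}$ is the product of all $F_{ij}$, $(i,j)\in\mathcal I_1$, taken in increasing $\prec$-order. *)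

From HB Require Import structures.
From mathcomp Require Import all_boot all_order all_algebra all_field.
Set Implicit Arguments. Unset Strict Implicit. Unset Printing Implicit Defensive.
Import Order.TTheory GRing.Theory Num.Theory.
Local Open Scope ring_scope.

(* Base field C(q), rendered as algC(q) = fraction field of {poly algC}. *)
Definition Kf : fieldType := {fraction {poly algC}}.
Definition qq : Kf := tofrac 'X.

Definition qs (m i : nat) : Kf := if (i <= m)%N then qq else qq^-1.

(* Frd m F i d = F_{i, i+d+1}, using F_{ij} = -q_c F_{ic} F_{cj} + F_{cj} F_{ic}, c = j-1 *)
Fixpoint Frd (A : algType Kf) (m : nat) (F : nat -> A) (i d : nat) : A :=
  match d with
  | 0 => F i
  | d'.+1 => let c := (i + d').+1 in
             (- qs m c) *: (Frd m F i d' * F c) + F c * Frd m F i d'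
  end.

(* Erd m E i d = E_{i, i+d+1}, using E_{ij} = E_{ic} E_{cj} - q_c^{-1} E_{cj} E_{ic}, c = j-1 *)
Fixpoint Erd (A : algType Kf) (m : nat) (E : nat -> A) (i d : nat) : A :=
  match d with
  | 0 => E i
  | d'.+1 => let c := (i + d').+1 in
             Erd m E i d' * E c - (qs m c)^-1 *: (E c * Erd m E i d')
  end.

(* F_{ij} and E_{ij} for i < j; here E k, F k stand for E_{k,k+1}, F_{k,k+1} *)
Definition Fij (A : algType Kf) (m : nat) (F : nat -> A) (i j : nat) : A :=
  Frd m F i (j - i).-1.
Definition Eij (A : algType Kf) (m : nat) (E : nat -> A) (i j : nat) : A :=
  Erd m E i (j - i).-1.

(* F_{I_1}: product over (i,j), i in [1,m], j in [m+1,m+n], in increasing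
   order for (i,j) < (s,t) iff j > t or (j = t and i < s):
   j runs downward from m+n to m+1, and for each j, i runs upward 1..m. *)
Definition FI1 (A : algType Kf) (m n : nat) (F : nat -> A) : A :=
  \prod_(t <- rev (iota m.+1 n)) \prod_(s <- iota 1 m) Fij m F s t.

Definition dlt (i j : nat) : int := ((i == j) : nat)%:Z - ((i == j.+1) : nat)%:Z.

(* Defining relations of U_q(gl(m|n)), with super-brackets written out
   using the parities of the generators. *)
Record Uq_rel (A : algType Kf) (m n : nat) (K Kinv E F : nat -> A) : Prop := {
  rK_comm : forall i j, (1 <= i <= m + n)%N -> (1 <= j <= m + n)%N ->
      K i * K j = K j * K i;
  rK_inv : forall i, (1 <= i <= m + n)%N -> K i * Kinv i = 1 /\ Kinv i * K i = 1;
  rKE : forall i j, (1 <= i <= m + n)%N -> (1 <= j < m + n)%N ->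
      K i * E j * Kinv i = (qs m i ^ dlt i j) *: E j;
  rKF : forall i j, (1 <= i <= m + n)%N -> (1 <= j < m + n)%N ->
      K i * F j * Kinv i = (qs m i ^ (- dlt i j)) *: F j;
  rEF : forall i j, (1 <= i < m + n)%N -> (1 <= j < m + n)%N ->
      (if (i == m) && (j == m) then E i * F j + F j * E i
       else E i * F j - F j * E i)
      = (if i == j then (qs m i - (qs m i)^-1)^-1 *:
                        (K i * Kinv i.+1 - Kinv i * K i.+1)
         else 0);
  rE2 : E m * E m = 0;
  rF2 : F m * F m = 0;
  rE_far : forall i j, (1 <= i < m + n)%N -> (1 <= j < m + n)%N ->
      (j.+1 < i)%N || (i.+1 < j)%N -> E i * E j = E j * E i;
  rF_far : forall i j, (1 <= i < m + n)%N -> (1 <= j < m + n)%N ->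
      (j.+1 < i)%N || (i.+1 < j)%N -> F i * F j = F j * F i;
  rE_serre : forall i j, (1 <= i < m + n)%N -> (1 <= j < m + n)%N ->
      (j == i.+1) || (i == j.+1) -> i != m ->
      E i * E i * E j - (qq + qq^-1) *: (E i * E j * E i) + E j * E i * E i = 0;
  rF_serre : forall i j, (1 <= i < m + n)%N -> (1 <= j < m + n)%N ->
      (j == i.+1) || (i == j.+1) -> i != m ->
      F i * F i * F j - (qq + qq^-1) *: (F i * F j * F i) + F j * F i * F i = 0;
  rE_quartic : (1 < m)%N -> (1 < n)%N ->
      Eij m E m.-1 m.+2 * E m + E m * Eij m E m.-1 m.+2 = 0;
  rF_quartic : (1 < m)%N -> (1 < n)%N ->
      Fij m F m.-1 m.+2 * F m + F m * Fij m F m.-1 m.+2 = 0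
}.

(* Every F_ij with (i,j) in I_0 is an iterated q-commutator of even generators
   F_k (k <> m), so it suffices that each even F_k commutes with F_I1; thus z = 0.
   For k < m, F_k commutes with every factor of a row t of F_I1 except with the
   pair F_kt F_(k+1)t, and F_kt is a q-commutator of F_k with the odd element
   F_(k+1)t, which squares to zero; this makes F_k commute with the pair.
   For k > m, F_k commutes with all columns but the adjacent columns k+1 and k.
   Passing F_k through the column Q = prod_s F_(s,k+1) gives a factor q^m;
   passing it back through column k, each step F_k F_sk = F_(s,k+1) + q^-1 F_sk F_k
   gives a factor q^-1 plus a term annihilated by Q, by the q-commutation rules
   between odd root vectors. *)

From HB Require Import structures.
From mathcomp Require Import all_boot all_order all_algebra all_field.
From mathcomp Require Import ring zify.
Set Implicit Arguments. Unset Strict Implicit. Unset Printing Implicit Defensive.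
Import GRing.Theory.
Local Open Scope ring_scope.

Section NCNormalize.
Variables (K : comNzRingType) (A : algType K).

Inductive ncterm :=
  | NCVar of nat | NCAdd of ncterm & ncterm | NCOpp of ncterm
  | NCMul of ncterm & ncterm | NCScale of K & ncterm | NCZero | NCOne.

Fixpoint nceval (env : seq A) (t : ncterm) : A :=
  match t with
  | NCVar i => env`_i
  | NCAdd x y => nceval env x + nceval env y
  | NCOpp x => - nceval env x
  | NCMul x y => nceval env x * nceval env y
  | NCScale c x => c *: nceval env x
  | NCZero => 0
  | NCOne => 1
  end.

Definition ncpoly := seq (K * seq nat).

Definition ncpoly_eval (env : seq A) (p : ncpoly) : A :=
  \sum_(cw <- p) cw.1 *: \prod_(i <- cw.2) env`_i.

Definition ncpoly_scale (c : K) (p : ncpoly) : ncpoly :=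
  [seq (c * cw.1, cw.2) | cw <- p].

Definition ncpoly_mul (p p' : ncpoly) : ncpoly :=
  [seq (cw.1 * cw'.1, cw.2 ++ cw'.2) | cw <- p, cw' <- p'].

Fixpoint ncnorm (t : ncterm) : ncpoly :=
  match t with
  | NCVar i => [:: (1, [:: i])]
  | NCAdd x y => ncnorm x ++ ncnorm y
  | NCOpp x => ncpoly_scale (-1) (ncnorm x)
  | NCMul x y => ncpoly_mul (ncnorm x) (ncnorm y)
  | NCScale c x => ncpoly_scale c (ncnorm x)
  | NCZero => [::]
  | NCOne => [:: (1, [::])]
  end.

Fixpoint word_eqb (w w' : seq nat) : bool :=
  match w, w' with
  | [::], [::] => true
  | i :: w, i' :: w' => eqn i i' && word_eqb w w'
  | _, _ => false
  end.

Fixpoint ncpoly_add_mono (cw : K * seq nat) (p : ncpoly) : ncpoly :=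
  match p with
  | [::] => [:: cw]
  | cw' :: p' => if word_eqb cw.2 cw'.2 then (cw.1 + cw'.1, cw'.2) :: p'
                 else cw' :: ncpoly_add_mono cw p'
  end.

Definition ncpoly_collect (p : ncpoly) : ncpoly := foldr ncpoly_add_mono [::] p.

Definition ncpoly_zero (p : ncpoly) : Prop := foldr (fun cw P => cw.1 = 0 /\ P) True p.

Lemma word_eqbP w w' : word_eqb w w' -> w = w'.
Proof. by elim: w w' => [|i w IH] [|i' w'] //= /andP[/eqnP-> /IH->]. Qed.

Lemma ncpoly_eval_cat env p p' :
  ncpoly_eval env (p ++ p') = ncpoly_eval env p + ncpoly_eval env p'.
Proof. exact: big_cat. Qed.

Lemma ncpoly_eval_cons env cw p :
  ncpoly_eval env (cw :: p) = cw.1 *: \prod_(i <- cw.2) env`_i + ncpoly_eval env p.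
Proof. exact: big_cons. Qed.

Lemma ncpoly_eval_scale env c p :
  ncpoly_eval env (ncpoly_scale c p) = c *: ncpoly_eval env p.
Proof. by rewrite /ncpoly_eval big_map scaler_sumr; apply: eq_bigr => cw _; rewrite scalerA. Qed.

Lemma ncpoly_eval_mul env p p' :
  ncpoly_eval env (ncpoly_mul p p') = ncpoly_eval env p * ncpoly_eval env p'.
Proof.
rewrite /ncpoly_eval big_allpairs_dep mulr_suml; apply: eq_bigr => cw _.
rewrite mulr_sumr; apply: eq_bigr => cw' _.
by rewrite big_cat -scalerAl -scalerAr scalerA.
Qed.

Lemma ncnormK env t : ncpoly_eval env (ncnorm t) = nceval env t.
Proof.
elim: t => [i|x IHx y IHy|x IHx|x IHx y IHy|c x IHx||] /=.
- by rewrite /ncpoly_eval big_seq1 big_seq1 scale1r.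
- by rewrite ncpoly_eval_cat IHx IHy.
- by rewrite ncpoly_eval_scale IHx scaleN1r.
- by rewrite ncpoly_eval_mul IHx IHy.
- by rewrite ncpoly_eval_scale IHx.
- by rewrite /ncpoly_eval big_nil.
- by rewrite /ncpoly_eval big_seq1 big_nil scale1r.
Qed.

Lemma ncpoly_eval_add_mono env cw p :
  ncpoly_eval env (ncpoly_add_mono cw p) = ncpoly_eval env (cw :: p).
Proof.
elim: p => [|cw' p IH] //=; rewrite !ncpoly_eval_cons.
case: ifP => [/word_eqbP-> | _]; first by rewrite ncpoly_eval_cons scalerDl addrA.
by rewrite ncpoly_eval_cons IH ncpoly_eval_cons addrCA.
Qed.

Lemma ncpoly_eval_collect env p : ncpoly_eval env (ncpoly_collect p) = ncpoly_eval env p.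
Proof. by elim: p => [|cw p IH] //=; rewrite ncpoly_eval_add_mono !ncpoly_eval_cons IH. Qed.

Lemma ncpoly_eval_zero env p : ncpoly_zero p -> ncpoly_eval env p = 0.
Proof.
elim: p => [|cw p IH] /=; first by rewrite /ncpoly_eval big_nil.
by case=> c0 /IH; rewrite ncpoly_eval_cons c0 scale0r add0r.
Qed.

Lemma ncnorm_sound env t t' :
  ncpoly_zero (ncpoly_collect (ncnorm t ++ ncpoly_scale (-1) (ncnorm t'))) ->
  nceval env t = nceval env t'.
Proof.
move/(ncpoly_eval_zero env); rewrite ncpoly_eval_collect ncpoly_eval_cat.
by rewrite ncpoly_eval_scale !ncnormK scaleN1r => /subr0_eq.
Qed.

End NCNormalize.

Ltac nc_index x env :=
  lazymatch env with
  | x :: _ => constr:(0%N)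
  | _ :: ?env' => let k := nc_index x env' in constr:(S k)
  end.

Ltac nc_reify env t :=
  lazymatch t with
  | (?x + ?y)%R =>
      let a := nc_reify env x in let b := nc_reify env y in open_constr:(@NCAdd _ a b)
  | (- ?x)%R => let a := nc_reify env x in open_constr:(@NCOpp _ a)
  | (?x * ?y)%R =>
      let a := nc_reify env x in let b := nc_reify env y in open_constr:(@NCMul _ a b)
  | (?c *: ?x)%R => let a := nc_reify env x in open_constr:(@NCScale _ c a)
  | 0%R => open_constr:(@NCZero _)
  | 1%R => open_constr:(@NCOne _)
  | _ => let k := nc_index t env in open_constr:(@NCVar _ k)
  end.

(* Reduces an equation in an algebra, whose atoms are listed in [env], to the
   vanishing of the coefficients of its normal form. *)
Ltac nc_reduce env :=
  lazymatch goal with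
  | |- ?l = ?r =>
      let a := nc_reify env l in let b := nc_reify env r in
      change (@nceval _ _ env a = @nceval _ _ env b); apply: ncnorm_sound;
      cbv beta iota delta [ncnorm ncpoly_scale ncpoly_mul ncpoly_collect
        ncpoly_add_mono ncpoly_zero word_eqb eqn flatten foldr map cat fst snd andb];
      repeat split
  end.

Tactic Notation "nc_ring" constr(env) := nc_reduce env; ring.
Tactic Notation "nc_field" constr(env) :=
  nc_reduce env; field; repeat (apply/andP; split); done.

Section QCommutators.
Variables (K : fieldType) (A : algType K).

Definition qcom (c : K) (u v : A) : A := c *: (u * v) + v * u.

Definition serre (q : K) (a y : A) : A :=
  a * a * y - (q + q^-1) *: (a * y * a) + y * a * a.

Definition scomm (c : K) (x y : A) : Prop := x * y = c *: (y * x).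

Lemma commr_subr0 (x y : A) : GRing.comm x y -> x * y - y * x = 0.
Proof. by move->; rewrite subrr. Qed.

Lemma anticommr_addr0 (x y : A) : x * y = - (y * x) -> x * y + y * x = 0.
Proof. by move->; rewrite addNr. Qed.

Lemma qcom_comm c (a u v : A) :
  GRing.comm a u -> GRing.comm a v -> GRing.comm a (qcom c u v).
Proof.
move=> /commr_subr0 du /commr_subr0 dv; apply: subr0_eq.
transitivity (c *: ((a*u - u*a)*v + u*(a*v - v*a)) + (a*v - v*a)*u + v*(a*u - u*a)).
  by rewrite /qcom; nc_ring [:: a; u; v].
by rewrite du dv !(mulr0, mul0r, addr0, scaler0).
Qed.

Lemma qcom_anticommr c (a u v : A) : GRing.comm a u -> a * v = - (v * a) ->
  a * qcom c u v = - (qcom c u v * a).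
Proof.
move=> /commr_subr0 du /anticommr_addr0 dv; apply: subr0_eq.
transitivity (c *: ((a*u - u*a)*v + u*(a*v + v*a)) + (a*v + v*a)*u - v*(a*u - u*a)).
  by rewrite /qcom; nc_ring [:: a; u; v].
by rewrite du dv !(mulr0, mul0r, addr0, scaler0, subr0).
Qed.

Lemma qcom_anticomml c (a u v : A) : a * u = - (u * a) -> GRing.comm a v ->
  a * qcom c u v = - (qcom c u v * a).
Proof.
move=> /anticommr_addr0 du /commr_subr0 dv; apply: subr0_eq.
transitivity (c *: ((a*u + u*a)*v - u*(a*v - v*a)) + (a*v - v*a)*u + v*(a*u + u*a)).
  by rewrite /qcom; nc_ring [:: a; u; v].
by rewrite du dv !(mulr0, mul0r, addr0, scaler0, subr0).
Qed.

Lemma qcomA c c' (a u v : A) : GRing.comm a u ->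
  qcom c' (qcom c u v) a = qcom c u (qcom c' v a).
Proof.
move=> /commr_subr0 du; apply: subr0_eq.
transitivity (c *: ((a*u - u*a)*v) - c' *: (v*(a*u - u*a))).
  by rewrite /qcom; nc_ring [:: a; u; v].
by rewrite du !(mulr0, mul0r, scaler0, subr0).
Qed.

Lemma serre_qcomr q c (a x y : A) : GRing.comm a x -> serre q a y = 0 ->
  serre q a (qcom c y x) = 0.
Proof.
move=> /commr_sym/commr_subr0 dx sy.
transitivity (c *: (serre q a y * x - (q + q^-1) *: (a*y*(x*a - a*x))
                    + y*(x*a - a*x)*a + y*a*(x*a - a*x))
  + (x * serre q a y - ((x*a - a*x)*a + a*(x*a - a*x))*y
     + (q + q^-1) *: ((x*a - a*x)*y*a))).
  by rewrite /qcom /serre; nc_ring [:: a; x; y].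
by rewrite dx sy !(mulr0, mul0r, scaler0, addr0, subr0, oppr0).
Qed.

Lemma serre_qcoml q c (a x y : A) : GRing.comm a x -> serre q a y = 0 ->
  serre q a (qcom c x y) = 0.
Proof.
move=> /commr_sym/commr_subr0 dx sy.
transitivity ((serre q a y * x - (q + q^-1) *: (a*y*(x*a - a*x))
                    + y*(x*a - a*x)*a + y*a*(x*a - a*x))
  + c *: (x * serre q a y - ((x*a - a*x)*a + a*(x*a - a*x))*y
     + (q + q^-1) *: ((x*a - a*x)*y*a))).
  by rewrite /qcom /serre; nc_ring [:: a; x; y].
by rewrite dx sy !(mulr0, mul0r, scaler0, addr0, subr0, oppr0).
Qed.

Lemma scomm_prodR c (x : A) (r : seq nat) (f : nat -> A) :
  (forall i, i \in r -> scomm c x (f i)) ->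
  scomm (c ^+ size r) x (\prod_(i <- r) f i).
Proof.
rewrite /scomm; elim: r => [|i r IH] h; first by rewrite big_nil mulr1 mul1r expr0 scale1r.
rewrite big_cons mulrA h ?mem_head // -scalerAl -[f i * x * _]mulrA IH => [|j rj]; last first.
  by apply: h; rewrite inE rj orbT.
by rewrite -scalerAr scalerA -exprS !mulrA.
Qed.

Lemma scomm_prodL c (y : A) (r : seq nat) (f : nat -> A) :
  (forall i, i \in r -> scomm c (f i) y) ->
  scomm (c ^+ size r) (\prod_(i <- r) f i) y.
Proof.
rewrite /scomm; elim: r => [|i r IH] h; first by rewrite big_nil mulr1 mul1r expr0 scale1r.
rewrite big_cons -mulrA IH => [|j rj]; last by apply: h; rewrite inE rj orbT.
rewrite -scalerAr [f i * (y * _)]mulrA h ?mem_head // -scalerAl scalerA -exprSr.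
by rewrite mulrA.
Qed.

Lemma scomm_qcom_sqr0 c (U X : A) : X * X = 0 -> scomm c X (qcom c U X).
Proof.
move=> X2; apply: subr0_eq.
transitivity ((X*X)*U - (c*c) *: (U*(X*X))); first by rewrite /qcom; nc_ring [:: X; U].
by rewrite X2 !(mulr0, mul0r, scaler0, subr0).
Qed.

Lemma scomm_sqr0_qcom c (a Y : A) : Y * Y = 0 -> scomm c (qcom c Y a) Y.
Proof.
move=> Y2; apply: subr0_eq.
transitivity (a*(Y*Y) - (c*c) *: ((Y*Y)*a)); first by rewrite /qcom; nc_ring [:: a; Y].
by rewrite Y2 !(mulr0, mul0r, scaler0, subr0).
Qed.

Lemma qcom_cross q (U X Y : A) : q != 0 -> scomm (- q) Y X ->
  Y * qcom (- q) U X = - (qcom (- q) U X * Y) ->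
  qcom (- q) U Y * X + X * qcom (- q) U Y = (q^-1 - q) *: (qcom (- q) U X * Y).
Proof.
rewrite /scomm => q_neq0 YX /anticommr_addr0 YUX.
have {}YX : Y * X + q *: (X * Y) = 0 by rewrite YX scaleNr addNr.
apply: subr0_eq.
transitivity (- q^-1 *: (Y * qcom (- q) U X + qcom (- q) U X * Y)
  - q *: (U * (Y*X + q *: (X*Y))) + q^-1 *: ((Y*X + q *: (X*Y)) * U)).
  by rewrite /qcom; nc_field [:: U; X; Y].
by rewrite YX YUX !(mulr0, mul0r, scaler0, subr0, addr0).
Qed.

(* [p] is a root of [X^2 - (q + q^-1) X + 1], i.e. [p = q] or [p = q^-1]. *)
Section Quantum.
Variables (q p : K).
Hypotheses (q_neq0 : q != 0) (qsqrD1_neq0 : q * q + 1 != 0)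
  (p_root : p * p + 1 = (q + q^-1) * p).

Let p_root0 : p * p + 1 - (q + q^-1) * p = 0.
Proof. by rewrite p_root subrr. Qed.

Lemma qcom_sqr0r (a X : A) : X * X = 0 -> serre q a X = 0 ->
  qcom (- p) X a * qcom (- p) X a = 0.
Proof.
move=> X2 sX.
transitivity ((p * p + 1 - (q + q^-1) * p) *: (X*a*X*a)
  - p *: (X * serre q a X - (X*X)*a*a) - p *: (a*(X*X)*a)
  - (q + q^-1)^-1 *: (serre q a X * X - X * serre q a X - a*a*(X*X) + (X*X)*a*a)).
  by rewrite /qcom /serre; nc_field [:: a; X].
by rewrite p_root0 X2 sX !(mulr0, mul0r, scaler0, scale0r, addr0, subr0, oppr0).
Qed.

Lemma qcom_sqr0l (a X : A) : X * X = 0 -> serre q a X = 0 ->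
  qcom (- p) a X * qcom (- p) a X = 0.
Proof.
move=> X2 sX.
transitivity ((p * p + 1 - (q + q^-1) * p) *: (X*a*X*a)
  - p *: (X * serre q a X - (X*X)*a*a) - p *: (a*(X*X)*a)
  - (p * p) *: ((q + q^-1)^-1 *: (serre q a X * X - X * serre q a X - a*a*(X*X) + (X*X)*a*a))).
  by rewrite /qcom /serre; nc_field [:: a; X].
by rewrite p_root0 X2 sX !(mulr0, mul0r, scaler0, scale0r, addr0, subr0, oppr0).
Qed.

Lemma qcom_comm_sqr0 c (a L : A) : L * L = 0 -> serre q a L = 0 ->
  GRing.comm a (qcom c a L * L).
Proof.
move=> L2 sL; apply: subr0_eq.
transitivity (c *: (a*a*(L*L) - a*(L*L)*a)
  - (q + q^-1)^-1 *: (serre q a L * L - L * serre q a L - a*a*(L*L) + (L*L)*a*a)).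
  by rewrite /qcom /serre; nc_field [:: a; L].
by rewrite L2 sL !(mulr0, mul0r, scaler0, subr0, addr0).
Qed.

Lemma scomm_qcom (a Y : A) : serre q a Y = 0 -> scomm p^-1 a (qcom (- p) Y a).
Proof.
have p_neq0 : p != 0.
  by apply: contra_eq_neq p_root => ->; rewrite !(mul0r, mulr0, add0r) oner_eq0.
have e : q + q^-1 - (p + p^-1) = 0.
  transitivity (((q + q^-1) * p - (p * p + 1)) / p); first by field; rewrite q_neq0 p_neq0.
  by rewrite p_root subrr mul0r.
move=> sY; apply: subr0_eq.
transitivity (serre q a Y + (q + q^-1 - (p + p^-1)) *: (a*Y*a)).
  by rewrite /qcom /serre; nc_field [:: a; Y].
by rewrite e sY !(scale0r, addr0).
Qed.

Lemma qcom_comm_rank3 (a b d : A) : serre q b a = 0 -> serre q b d = 0 ->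
  GRing.comm a d -> GRing.comm b (qcom (- p) (qcom (- p) a b) d).
Proof.
move=> sa sd /commr_subr0 ad; apply: subr0_eq.
transitivity (- p *: (serre q b a * d) + p *: (b*(a*d - d*a)*b) - p *: ((a*d - d*a)*b*b)
  + p *: (a * serre q b d)
  + (q + q^-1)^-1 *: (serre q b a * d - serre q b d * a - a * serre q b d + d * serre q b a
                      - b*b*(a*d - d*a) + (a*d - d*a)*b*b)
  + (p * p + 1 - (q + q^-1) * p) *: (b*a*b*d - a*b*d*b)).
  by rewrite /qcom /serre; nc_field [:: a; b; d].
by rewrite p_root0 sa sd ad !(mulr0, mul0r, scaler0, scale0r, addr0, subr0, oppr0).
Qed.

End Quantum.
End QCommutators.

Lemma commr_prod_in (R : pzRingType) (x : R) (r : seq nat) (f : nat -> R) :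
  (forall i, i \in r -> GRing.comm x (f i)) -> GRing.comm x (\prod_(i <- r) f i).
Proof. by rewrite big_seq; apply: commr_prod. Qed.

Lemma iotaSr a p : iota a p.+1 = rcons (iota a p) (a + p)%N.
Proof. by rewrite -cats1 -addn1 iotaD. Qed.

Lemma iota_split2 a k b : (a <= k)%N -> (k.+2 <= a + b)%N ->
  iota a b = iota a (k - a) ++ [:: k, k.+1 & iota k.+2 (a + b - k.+2)].
Proof.
move=> ak kb; rewrite -{1}(subnKC (_ : (k - a <= b)%N)); last by lia.
rewrite iotaD subnKC //; congr (_ ++ _).
by rewrite (_ : (b - (k - a) = (a + b - k.+2).+2)%N) //; lia.
Qed.

Lemma descend_ind (P : nat -> Prop) (k : nat) :
  (forall s, (s < k)%N -> ((s.+1 < k)%N -> P s.+1) -> P s) ->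
  forall s, (s < k)%N -> P s.
Proof.
move=> step s; have [d] := ubnP (k - s); elim: d s => // d IH s hd sk.
by apply: step => // s1k; apply: IH; lia.
Qed.

Lemma qq_neq0 : qq != 0.
Proof. by rewrite /qq tofrac_eq0 polyX_eq0. Qed.

Lemma qq_sqrD1_neq0 : qq * qq + 1 != 0.
Proof.
rewrite /qq -tofracM -tofrac1 -tofracD tofrac_eq0 -expr2.
apply/eqP => /(congr1 (fun p : {poly algC} => p`_0)).
by rewrite coefD coefXn coef1 add0r coef0 => /eqP; rewrite oner_eq0.
Qed.

Lemma qs_le m c : (c <= m)%N -> qs m c = qq.
Proof. by rewrite /qs => ->. Qed.

Lemma qs_gt m c : (m < c)%N -> qs m c = qq^-1.
Proof. by move=> mc; rewrite /qs leqNgt mc. Qed.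

Lemma qs_succ m c : c != m -> qs m c.+1 = qs m c.
Proof. by move=> cm; rewrite /qs ltn_neqAle cm. Qed.

Lemma qs_root m c : qs m c * qs m c + 1 = (qq + qq^-1) * qs m c.
Proof.
rewrite /qs mulrDl; case: ifP => _; first by rewrite mulVf ?qq_neq0.
by rewrite divff ?qq_neq0 // addrC.
Qed.

Section Uq.
Variables (m n : nat) (A : algType Kf) (K Kinv E F : nat -> A).
Hypothesis UqA : Uq_rel m n K Kinv E F.
Local Notation N := (m + n)%N.
Local Notation Fr := (Fij m F).

Lemma F_comm_far i j : (1 <= i < N)%N -> (1 <= j < N)%N ->
  (j.+1 < i)%N || (i.+1 < j)%N -> GRing.comm (F i) (F j).
Proof. exact: (rF_far UqA). Qed.

Lemma serre_F i j : (1 <= i < N)%N -> (1 <= j < N)%N -> (j == i.+1) || (i == j.+1) ->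
  i != m -> serre qq (F i) (F j) = 0.
Proof. exact: (rF_serre UqA). Qed.

Lemma Fr_gen k : Fr k k.+1 = F k.
Proof. by rewrite /Fij subSnn. Qed.

Lemma Fr_recr s t : (s < t)%N -> Fr s t.+1 = qcom (- qs m t) (Fr s t) (F t).
Proof.
move=> st; rewrite /Fij (_ : (t.+1 - s).-1 = (t - s).-1.+1) /=; last by lia.
by rewrite (_ : (s + (t - s).-1).+1 = t) //; lia.
Qed.

Lemma F_comm_Fr_far k s t : (1 <= k < N)%N -> (1 <= s)%N -> (s < t <= N)%N ->
  (t < k)%N || (k.+1 < s)%N -> GRing.comm (F k) (Fr s t).
Proof.
move=> kN s1; elim: t => [|t IH] //= st far.
have [<-|lt] : s = t \/ (s < t)%N by lia.
  by rewrite Fr_gen; apply: F_comm_far; lia.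
by rewrite Fr_recr //; apply: qcom_comm; [apply: IH | apply: F_comm_far]; lia.
Qed.

Lemma Fr_split s c t : (1 <= s)%N -> (s < c < t)%N -> (t <= N)%N ->
  Fr s t = qcom (- qs m c) (Fr s c) (Fr c t).
Proof.
move=> s1; elim: t => [|t IH] sct tN; first by lia.
have [<-|lt] : c = t \/ (c < t)%N by lia.
  by rewrite Fr_recr ?Fr_gen //; lia.
rewrite Fr_recr; last by lia.
rewrite IH; try lia.
rewrite [Fr c t.+1]Fr_recr //; apply: qcomA.
by apply: F_comm_Fr_far; lia.
Qed.

Lemma Fr_recl s t : (1 <= s)%N -> (s.+1 < t <= N)%N ->
  Fr s t = qcom (- qs m s.+1) (F s) (Fr s.+1 t).
Proof. by move=> s1 st; rewrite (@Fr_split s s.+1 t) ?Fr_gen //; lia. Qed.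

Lemma serre_F_Frl k s : (s < k)%N -> (1 <= s)%N -> (k < N)%N -> k != m ->
  serre qq (F k) (Fr s k) = 0.
Proof.
move=> sk s1 kN km; move: s sk s1; apply: descend_ind => s sk IH s1.
have [e|lt] : k = s.+1 \/ (s.+1 < k)%N by lia.
  by rewrite e Fr_gen; apply: serre_F; lia.
rewrite Fr_recl //; last by lia.
by apply: serre_qcoml; [apply: F_comm_far | apply: IH]; lia.
Qed.

Lemma serre_F_Frr k t : (1 <= k)%N -> (k.+1 < t <= N)%N -> k != m ->
  serre qq (F k) (Fr k.+1 t) = 0.
Proof.
move=> k1; elim: t => [|t IH] kt km; first by lia.
have [e|lt] : t = k.+1 \/ (k.+1 < t)%N by lia.
  by rewrite e Fr_gen; apply: serre_F; lia.
by rewrite Fr_recr //; apply: serre_qcomr; [apply: F_comm_far | apply: IH]; lia.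
Qed.

Lemma Fr_sqr0 s t : (1 <= s <= m)%N -> (m < t <= N)%N -> Fr s t * Fr s t = 0.
Proof.
move=> /andP[s1 sm] mt; have m1 : (1 <= m)%N by apply: leq_trans sm.
have Fmt_sqr0 t' : (m < t' <= N)%N -> Fr m t' * Fr m t' = 0.
  elim: t' => [|t' IH] mt'; first by lia.
  have [e|lt] : t' = m \/ (m < t')%N by lia.
    by rewrite e Fr_gen (rF2 UqA).
  rewrite Fr_recr //; apply: (qcom_sqr0r qq_neq0 qq_sqrD1_neq0 (qs_root m t')).
    by apply: IH; lia.
  by apply: serre_F_Frl; lia.
rewrite -ltnS in sm; move: s sm s1.
apply: descend_ind => s sm IH s1.
have [e|lt] : s = m \/ (s < m)%N by lia.
  by rewrite e; exact: Fmt_sqr0.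
rewrite Fr_recl //; last by lia.
apply: (qcom_sqr0l qq_neq0 qq_sqrD1_neq0 (qs_root m s.+1)).
  by apply: IH; lia.
by apply: serre_F_Frr; lia.
Qed.

Lemma F_comm_Fr_pred j t : (1 <= j)%N -> (j.+3 <= t <= N)%N -> j.+1 != m ->
  GRing.comm (F j.+1) (Fr j t).
Proof.
move=> j1; elim: t => [|t IH] jt jm; first by lia.
have [e|lt] : t = j.+2 \/ (j.+3 <= t)%N by lia.
  rewrite e Fr_recr // Fr_recr // Fr_gen (qs_succ jm).
  apply: (qcom_comm_rank3 qq_neq0 qq_sqrD1_neq0 (qs_root m j.+1)).
  - by apply: serre_F; lia.
  - by apply: serre_F; lia.
  - by apply: F_comm_far; lia.
by rewrite Fr_recr; [apply: qcom_comm; [apply: IH | apply: F_comm_far] | ]; lia.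
Qed.

Lemma F_comm_Fr_in k s t : (1 <= s)%N -> (s < k)%N -> (k.+2 <= t <= N)%N -> k != m ->
  GRing.comm (F k) (Fr s t).
Proof.
move=> s1 sk kt km; move: s sk s1; apply: descend_ind => s sk IH s1.
have [e|lt] : k = s.+1 \/ (s.+1 < k)%N by lia.
  by rewrite e; apply: F_comm_Fr_pred; rewrite -?e; lia.
rewrite Fr_recl //; last by lia.
by apply: qcom_comm; [apply: F_comm_far | apply: IH]; lia.
Qed.

Lemma F_anticomm_Fr s t : (1 <= s < m)%N -> (m.+2 <= t <= N)%N ->
  F m * Fr s t = - (Fr s t * F m).
Proof.
move=> /andP[s1 sm] mt.
have base t' : (m.+2 <= t' <= N)%N -> F m * Fr m.-1 t' = - (Fr m.-1 t' * F m).
  elim: t' => [|t' IH] mt'; first by lia.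
  have [e|lt] : t' = m.+1 \/ (m.+2 <= t')%N by lia.
    have m2 : (1 < m)%N by lia.
    have n2 : (1 < n)%N by lia.
    by have /eqP := rF_quartic UqA m2 n2; rewrite e addrC addr_eq0 => /eqP.
  by rewrite Fr_recr; [apply: qcom_anticomml; [apply: IH | apply: F_comm_far] | ]; lia.
move: s sm s1; apply: descend_ind => s sm IH s1.
have [e|lt] : m = s.+1 \/ (s.+1 < m)%N by lia.
  by rewrite [s](_ : s = m.-1); [apply: base | lia].
rewrite Fr_recl //; last by lia.
by apply: qcom_anticommr; [apply: F_comm_far | apply: IH]; lia.
Qed.

Lemma Fr_anticomm_nested r s t u : (1 <= r)%N -> (r < s <= m)%N -> (m < t)%N ->
  (t < u <= N)%N -> Fr s t * Fr r u = - (Fr r u * Fr s t).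
Proof.
move=> r1 /andP[rs sm] mt tu.
suff anti : Fr r u * Fr s t = - (Fr s t * Fr r u) by rewrite anti opprK.
have base t' : (m < t' < u)%N -> Fr r u * Fr m t' = - (Fr m t' * Fr r u).
  elim: t' => [|t' IH] mt'; first by lia.
  have [e|lt] : t' = m \/ (m < t')%N by lia.
    by rewrite e Fr_gen F_anticomm_Fr ?opprK //; lia.
  rewrite Fr_recr //; apply: qcom_anticomml; first by apply: IH; lia.
  by apply/commr_sym/F_comm_Fr_in; lia.
rewrite -ltnS in sm; move: s sm rs; apply: descend_ind => s sm IH rs.
have [e|lt] : s = m \/ (s < m)%N by lia.
  by rewrite e; apply: base; lia.
rewrite (@Fr_recl s t); try lia.
apply: qcom_anticommr; first by apply/commr_sym/F_comm_Fr_in; lia.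
by apply: IH; lia.
Qed.

Lemma Fr_scomm_col s r t : (1 <= s)%N -> (s < r <= m)%N -> (m < t <= N)%N ->
  scomm (- qq) (Fr r t) (Fr s t).
Proof.
move=> s1 sr mt; rewrite (@Fr_split s r t) ?qs_le; try lia.
by apply: scomm_qcom_sqr0; apply: Fr_sqr0; lia.
Qed.

Lemma Fr_scomm_row s k : (1 <= s <= m)%N -> (m < k < N)%N ->
  scomm (- qq) (Fr s k) (Fr s k.+1).
Proof.
move=> sm mk; rewrite Fr_recr; last by lia.
have /(congr1 (fun x => (- qq) *: x)) : scomm (- qs m k) (qcom (- qs m k) (Fr s k) (F k)) (Fr s k).
  by apply: scomm_sqr0_qcom; apply: Fr_sqr0; lia.
by rewrite qs_gt ?scalerA ?mulrNN ?mulfV ?qq_neq0 ?scale1r //; lia.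
Qed.

Lemma Fr_cross r s k : (1 <= r)%N -> (r < s <= m)%N -> (m < k < N)%N ->
  Fr r k * Fr s k.+1 + Fr s k.+1 * Fr r k = (qq^-1 - qq) *: (Fr r k.+1 * Fr s k).
Proof.
move=> r1 rs mk.
have nested := @Fr_anticomm_nested r s k k.+1 r1 rs.
have row := @Fr_scomm_row s k.
rewrite (@Fr_split r s k) ?(@Fr_split r s k.+1) ?qs_le in nested *; try lia.
by apply: qcom_cross qq_neq0 (row _ _) (nested _ _); lia.
Qed.

Lemma F_comm_FI1_lt k : (1 <= k < m)%N -> GRing.comm (F k) (FI1 m n F).
Proof.
move=> km; rewrite /FI1; apply: commr_prod_in => t.
rewrite mem_rev mem_iota => mt.
rewrite (@iota_split2 1 k m); try lia.
rewrite big_cat /= !big_cons [Fr k t * _]mulrA; apply: commrM; last apply: commrM.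
- apply: commr_prod_in => s; rewrite mem_iota => ss.
  by apply: F_comm_Fr_in; lia.
- rewrite (@Fr_recl k t) ?qs_le; try lia.
  apply: (qcom_comm_sqr0 qq_neq0 qq_sqrD1_neq0); first by apply: Fr_sqr0; lia.
  by apply: serre_F_Frr; lia.
- apply: commr_prod_in => s; rewrite mem_iota => ss.
  by apply: F_comm_Fr_far; lia.
Qed.

Section Middle.
Variable k : nat.
Hypothesis mk : (m < k < N)%N.
Local Notation X s := (Fr s k.+1).
Local Notation Y s := (Fr s k).
Local Notation Q := (\prod_(s <- iota 1 m) X s).

Lemma scomm_F_X s : (1 <= s <= m)%N -> scomm qq (F k) (X s).
Proof.
move=> sm; have sY : serre qq (F k) (Y s) = 0 by apply: serre_F_Frl; lia.
rewrite Fr_recr; last by lia.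
by have := scomm_qcom qq_neq0 (qs_root m k) sY; rewrite qs_gt ?invrK //; lia.
Qed.

Lemma scomm_F_Q : scomm (qq ^+ m) (F k) Q.
Proof.
rewrite -{1}(size_iota 1 m); apply: scomm_prodR => s.
by rewrite mem_iota => ss; apply: scomm_F_X; lia.
Qed.

Lemma Q_mulX s : (1 <= s <= m)%N -> Q * X s = 0.
Proof.
move=> sm; rewrite (_ : iota 1 m = iota 1 s.-1 ++ s :: iota s.+1 (m - s)); last first.
  have e : m = (s.-1 + (m - s).+1)%N by lia.
  by rewrite {1}e iotaD add1n prednK //; lia.
rewrite big_cat /= big_cons -!mulrA.
have := @scomm_prodL _ _ (- qq) (X s) (iota s.+1 (m - s)) (fun r => X r).
rewrite /scomm => ->; last by move=> r; rewrite mem_iota => rs; apply: Fr_scomm_col; lia.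
by rewrite -scalerAr mulrA Fr_sqr0 ?mul0r ?scaler0 ?mulr0 //; lia.
Qed.

Lemma Q_Ys_X p s : (p <= m)%N -> (1 <= s <= m)%N ->
  Q * (\prod_(r <- iota 1 p) Y r) * X s = 0.
Proof.
elim: p s => [|p IH] s pm sm; first by rewrite big_nil mulr1 Q_mulX.
rewrite iotaSr big_rcons /= add1n mulrA -mulrA.
have [ps|[<-|sp]] : (p.+1 < s)%N \/ p.+1 = s \/ (s < p.+1)%N by lia.
- have -> : Y p.+1 * X s = (qq^-1 - qq) *: (X p.+1 * Y s) - X s * Y p.+1.
    by rewrite -Fr_cross ?addrK //; lia.
  by rewrite mulrBr -scalerAr !mulrA !IH ?mul0r ?scaler0 ?subr0 //; lia.
- by rewrite Fr_scomm_row -?scalerAr ?mulrA ?IH ?mul0r ?scaler0 //; lia.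
- by rewrite Fr_anticomm_nested ?mulrN ?mulrA ?IH ?mul0r ?oppr0 //; lia.
Qed.

Lemma Q_F_Ys p : (p <= m)%N ->
  Q * F k * (\prod_(r <- iota 1 m) Y r) =
  (qq^-1) ^+ p *: (Q * (\prod_(r <- iota 1 p) Y r) * F k * (\prod_(r <- iota p.+1 (m - p)) Y r)).
Proof.
elim: p => [|p IH] pm; first by rewrite big_nil expr0 scale1r mulr1 subn0.
rewrite IH; last by lia.
have FY : F k * Y p.+1 = X p.+1 + qq^-1 *: (Y p.+1 * F k).
  rewrite (@Fr_recr p.+1 k) /qcom ?qs_gt; try lia.
  by rewrite scaleNr addrC addNKr.
rewrite -subnSK // big_cons -!mulrA [F k * (_ * _)]mulrA FY mulrDl !mulrDr !mulrA Q_Ys_X; try lia.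
rewrite mul0r add0r -scalerAr -scalerAl scalerA -exprSr iotaSr big_rcons /= add1n.
by rewrite !mulrA.
Qed.

Lemma F_comm_QY : GRing.comm (F k) (Q * \prod_(s <- iota 1 m) Y s).
Proof.
rewrite /GRing.comm mulrA scomm_F_Q -scalerAl (Q_F_Ys (leqnn m)) subnn big_nil mulr1.
by rewrite scalerA -exprMn mulfV ?qq_neq0 // expr1n scale1r.
Qed.

End Middle.

Lemma F_comm_FI1_gt k : (m < k < N)%N -> GRing.comm (F k) (FI1 m n F).
Proof.
move=> mk; rewrite /FI1 (@iota_split2 m.+1 k n); try lia.
rewrite rev_cat !rev_cons !cat_rcons big_cat /= !big_cons.
rewrite [\prod_(s <- iota 1 m) Fr s k.+1 * _]mulrA; apply: commrM; last apply: commrM.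
- apply: commr_prod_in => t; rewrite mem_rev mem_iota => kt.
  by apply: commr_prod_in => s; rewrite mem_iota => ss; apply: F_comm_Fr_in; lia.
- exact: F_comm_QY.
- apply: commr_prod_in => t; rewrite mem_rev mem_iota => tk.
  by apply: commr_prod_in => s; rewrite mem_iota => ss; apply: F_comm_Fr_far; lia.
Qed.

Lemma F_comm_FI1 k : (1 <= k < N)%N -> k != m -> GRing.comm (F k) (FI1 m n F).
Proof.
move=> kN km; have [lt|gt] : (k < m)%N \/ (m < k)%N by lia.
  by apply: F_comm_FI1_lt; lia.
by apply: F_comm_FI1_gt; lia.
Qed.

Lemma Fr_comm_FI1 i j : (1 <= i < j)%N -> (j <= N)%N ->
  (forall k, (i <= k < j)%N -> k != m) -> GRing.comm (Fr i j) (FI1 m n F).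
Proof.
move=> ij; elim: j ij => [|j IH] ij jN even; first by lia.
have [<-|lt] : i = j \/ (i < j)%N by lia.
  by rewrite Fr_gen; apply: F_comm_FI1; [lia | apply: even; lia].
rewrite Fr_recr //; apply/commr_sym/qcom_comm; apply: commr_sym.
  by apply: IH => [||k kj]; [lia | lia | apply: even; lia].
by apply: F_comm_FI1; [lia | apply: even; lia].
Qed.

End Uq.

Theorem lemma5p7 (m n : nat) (hm : (1 <= m)%N) (hn : (1 <= n)%N) (i j : nat)
  (hij : [&& 1 <= i, i < j & j <= m]%N || [&& m.+1 <= i, i < j & j <= m + n]%N) :
  exists z : int, forall (A : algType Kf) (K Kinv E F : nat -> A),
    Uq_rel m n K Kinv E F ->
    Fij m F i j * FI1 m n F = (qq ^ z) *: (FI1 m n F * Fij m F i j).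
Proof.
exists 0 => A K Kinv E F UqA; rewrite expr0z scale1r.
by apply: (Fr_comm_FI1 UqA) => [||k]; lia.
Qed.
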